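(* Let $a_1,\dots,a_n\in\mathbb{R}^d$, $f_1,\dots,f_n:\mathbb{R}\to[0,\infty)$ twice differentiable, $\gamma:\mathbb{R}^d\to[0,\infty)$, $F(x)=\frac1n\sum_{i=1}^n f_i(a_i^Tx)+\gamma(x)$, $\lambda>0$, $y\in\mathbb{R}^d$, $r>0$, and $F_{\lambda,y}(x)=F(x)+\lambda\|x-y\|_2^2$. Let $\tilde f_i$ and $\tilde F_{\lambda,y}$ be the quadratic approximations defined in the context. Let $B(r,y)=\{x:\|x-y\|_2\le r\}$ and suppose that there are constants $C_1,\dots,C_n\ge 0$ such that for all $x\in B(r,y)$: (i) $f_i(a_i^Tx)-\tilde f_i(x)\le \frac{C_i}{6}\|x-y\|_2^3$ for every $i$; (ii) $F_{\lambda,y}(x)\ge \tilde F_{\lambda,y}(x)$; (iii) $\tilde F_{\lambda,y}(x)>0$. Let $\alpha=\min_{x\in B(r,y)}F_{\lambda,y}(x)$ and assume $\alpha>0$. Then for every $i\in[n]$, $$\sup_{x\in B(r,y)}\frac{\frac1n f_i(a_i^Tx)}{F_{\lambda,y}(x)}\;\le\;\sup_{x\in B(r,y)}\frac{\frac1n \tilde f_i(x)}{\tilde F_{\lambda,y}(x)}+\min\Big(\frac{C_i r}{6n\lambda},\ \frac{C_i r^3}{6n\alpha}\Big).$$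
   Context: Quadratic approximation around $y$: $\tilde f_i(x)=f_i(a_i^Ty)+a_i^T(x-y)f_i'(a_i^Ty)+\tfrac12(a_i^T(x-y))^2f_i''(a_i^Ty)$ and $\tilde F_{\lambda,y}(x)=\frac1n\sum_{i=1}^n\tilde f_i(x)+\gamma(x)+\lambda\|x-y\|_2^2$. The two suprema are the local sensitivities of $a_i$ with respect to $F_{\lambda,y}$ and $\tilde F_{\lambda,y}$ on $B(r,y)$. *)

From mathcomp Require Import ssreflect ssrfun ssrbool eqtype ssrnat seq fintype bigop.
From Stdlib Require Import Reals.
Open Scope R_scope.

Definition vec (d : nat) := 'I_d -> R.

Definition dot {d : nat} (u v : vec d) : R := \big[Rplus/0]_(k < d) (u k * v k).
Definition vsub {d : nat} (u v : vec d) : vec d := fun k => u k - v k.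
Definition norm2 {d : nat} (u : vec d) : R := sqrt (dot u u).

Definition ball {d : nat} (r : R) (y x : vec d) : Prop := norm2 (vsub x y) <= r.

Definition Fly {d n : nat} (a : 'I_n -> vec d) (f : 'I_n -> R -> R)
  (gamma : vec d -> R) (lam : R) (y x : vec d) : R :=
  / INR n * (\big[Rplus/0]_(i < n) f i (dot (a i) x)) + gamma x
  + lam * (norm2 (vsub x y)) ^ 2.

(* quadratic approximation of f_i(a_i^T .) around y; f1 = f', f2 = f'' *)
Definition ftilde {d : nat} (a : vec d) (f f1 f2 : R -> R) (y x : vec d) : R :=
  f (dot a y) + dot a (vsub x y) * f1 (dot a y)
  + / 2 * (dot a (vsub x y)) ^ 2 * f2 (dot a y).

Definition Ftilde {d n : nat} (a : 'I_n -> vec d) (f f1 f2 : 'I_n -> R -> R)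
  (gamma : vec d -> R) (lam : R) (y x : vec d) : R :=
  / INR n * (\big[Rplus/0]_(i < n) ftilde (a i) (f i) (f1 i) (f2 i) y x) + gamma x
  + lam * (norm2 (vsub x y)) ^ 2.

(* On B(r,y) the error of the quadratic model is at most E = (C_i/6)||x-y||^3.
   Since F_{lambda,y} >= F~_{lambda,y} > 0, the ratio (1/n) f_i / F_{lambda,y} exceeds
   the ratio of the model by at most (E/n) / F_{lambda,y}, and F_{lambda,y} dominates both
   lambda ||x-y||^2 (as f_i, gamma >= 0) and alpha, which gives the two bounds in the min. *)
From mathcomp Require Import ssreflect ssrfun ssrbool eqtype ssrnat seq fintype bigop.
From Stdlib Require Import Reals Lra Psatz.
Open Scope R_scope.

Lemma dot_vsub_diag {d : nat} (a y : vec d) : dot a (vsub y y) = 0.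
Proof.
rewrite /dot; apply: (big_ind (fun v => v = 0)) => //.
- by move=> u v -> ->; rewrite Rplus_0_r.
- by move=> k _; rewrite /vsub Rminus_diag Rmult_0_r.
Qed.

Lemma ball_center {d : nat} (r : R) (y : vec d) : 0 <= r -> ball r y y.
Proof. by rewrite /ball /norm2 dot_vsub_diag sqrt_0. Qed.

Lemma ftilde_center {d : nat} (a : vec d) (f f1 f2 : R -> R) (y : vec d) :
  ftilde a f f1 f2 y y = f (dot a y).
Proof. rewrite /ftilde dot_vsub_diag; ring. Qed.

Lemma big_Rplus_ge0 (n : nat) (g : 'I_n -> R) :
  (forall i, 0 <= g i) -> 0 <= \big[Rplus/0]_(i < n) g i.
Proof.
move=> g_ge0; apply: (big_ind (fun v => 0 <= v)) => //; first lra.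
by move=> u v; lra.
Qed.

Lemma Fly_ge_penalty {d n : nat} (a : 'I_n -> vec d) (f : 'I_n -> R -> R)
    (gamma : vec d -> R) (lam : R) (y x : vec d) :
  (forall i t, 0 <= f i t) -> 0 <= gamma x ->
  lam * norm2 (vsub x y) ^ 2 <= Fly a f gamma lam y x.
Proof.
move=> f_ge0 gamma_ge0; rewrite /Fly.
have sum_ge0 : 0 <= \big[Rplus/0]_(i < n) f i (dot (a i) x).
{ by apply: big_Rplus_ge0 => i; apply: f_ge0. }
suff : 0 <= / INR n * \big[Rplus/0]_(i < n) f i (dot (a i) x) by lra.
move: a f f_ge0 sum_ge0; case: n => [|n] a f _ sum_ge0; first by rewrite big_ord0 Rmult_0_r; lra.
by apply: Rmult_le_pos => //; left; apply: Rinv_0_lt_compat; apply: lt_0_INR; lia.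
Qed.

(* [0 <= T] covers the case [v < 0], where the smaller denominator [G] does not help. *)
Lemma ratio_le_approx_ratio {u v E F G T : R} :
  0 < G -> G <= F -> u <= v + E -> v / G <= T -> 0 <= T -> u / F <= T + E / F.
Proof.
move=> G_gt0 GF uvE vG T_ge0.
have invF_gt0 : 0 < / F by apply: Rinv_0_lt_compat; lra.
have vF : v / F <= T.
{ case: (Rle_lt_dec 0 v) => v_sign.
  - apply: Rle_trans vG; apply: Rmult_le_compat_l => //.
    exact: Rinv_le_contravar.
  - rewrite /Rdiv; nra. }
have : u / F <= (v + E) / F by apply: Rmult_le_compat_r; lra.
rewrite /Rdiv Rmult_plus_distr_r in vF *; lra.
Qed.

Lemma div_le_div_cross (a b p q : R) : 0 < p -> 0 < q -> a * q <= b * p -> a / p <= b / q.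
Proof.
move=> p_gt0 q_gt0 cross; apply: (Rmult_le_reg_r (p * q)); first nra.
have -> : a / p * (p * q) = a * q by field; lra.
have -> : b / q * (p * q) = b * p by field; lra.
exact: cross.
Qed.

Lemma cubic_ratio_le (c t r lam alpha F : R) :
  0 <= c -> 0 <= t -> t <= r -> 0 < lam -> 0 < alpha ->
  lam * t ^ 2 <= F -> alpha <= F ->
  c * t ^ 3 / F <= Rmin (c * r / lam) (c * r ^ 3 / alpha).
Proof.
move=> c_ge0 t_ge0 tr lam_gt0 alpha_gt0 penalty_le alpha_le.
have F_gt0 : 0 < F by lra.
apply: Rmin_glb; apply: div_le_div_cross => //.
- have ct_ge0 : 0 <= c * t by nra.
  have : c * t * (lam * t ^ 2) <= c * t * F by apply: Rmult_le_compat_l.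
  have : c * t * F <= c * r * F by apply: Rmult_le_compat_r; nra.
  have -> : c * t ^ 3 * lam = c * t * (lam * t ^ 2) by ring.
  lra.
- have t3_le : t ^ 3 <= r ^ 3 by apply: pow_incr; lra.
  have t3_ge0 : 0 <= t ^ 3 by apply: pow_le.
  have ct3_ge0 : 0 <= c * t ^ 3 by nra.
  have : c * t ^ 3 * alpha <= c * t ^ 3 * F by apply: Rmult_le_compat_l.
  have : c * t ^ 3 * F <= c * r ^ 3 * F by apply: Rmult_le_compat_r; nra.
  lra.
Qed.

(* The derivative hypotheses only give f1, f2 their meaning. *)
Theorem theorem3 (d n : nat) (a : 'I_n -> vec d)
  (f f1 f2 : 'I_n -> R -> R) (gamma : vec d -> R)
  (lam : R) (y : vec d) (r : R) (C : 'I_n -> R) (alpha : R)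
  (hf_nonneg : forall i t, 0 <= f i t)
  (hf1 : forall i t, derivable_pt_lim (f i) t (f1 i t))
  (hf2 : forall i t, derivable_pt_lim (f1 i) t (f2 i t))
  (hgamma : forall x, 0 <= gamma x)
  (hlam : 0 < lam) (hr : 0 < r)
  (hC : forall i, 0 <= C i)
  (h1 : forall x, ball r y x -> forall i,
      f i (dot (a i) x) - ftilde (a i) (f i) (f1 i) (f2 i) y x
        <= C i / 6 * (norm2 (vsub x y)) ^ 3)
  (h2 : forall x, ball r y x -> Fly a f gamma lam y x >= Ftilde a f f1 f2 gamma lam y x)
  (h3 : forall x, ball r y x -> Ftilde a f f1 f2 gamma lam y x > 0)
  (halpha_lb : forall x, ball r y x -> alpha <= Fly a f gamma lam y x)
  (halpha_glb : forall b, (forall x, ball r y x -> b <= Fly a f gamma lam y x) -> b <= alpha)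
  (halpha : alpha > 0) :
  forall (i : 'I_n) (T : R),
    is_lub (fun v => exists x, ball r y x /\
              v = / INR n * ftilde (a i) (f i) (f1 i) (f2 i) y x
                  / Ftilde a f f1 f2 gamma lam y x) T ->
    forall x, ball r y x ->
      / INR n * f i (dot (a i) x) / Fly a f gamma lam y x
      <= T + Rmin (C i * r / (6 * INR n * lam)) (C i * r ^ 3 / (6 * INR n * alpha)).
Proof.
move=> i T [T_ub _] x Bx.
have N_gt0 : 0 < INR n by apply/lt_0_INR/ltP; exact: leq_ltn_trans (leq0n i) (ltn_ord i).
have By := ball_center _ y (Rlt_le _ _ hr).
have T_ge0 : 0 <= T.
{ apply: Rle_trans (T_ub _ (ex_intro _ y (conj By erefl))).
  rewrite ftilde_center /Rdiv; apply: Rmult_le_pos; last by left; apply: Rinv_0_lt_compat; apply: h3.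
  by apply: Rmult_le_pos; [left; apply: Rinv_0_lt_compat | apply: hf_nonneg]. }
have model_err : / INR n * f i (dot (a i) x) <= / INR n * ftilde (a i) (f i) (f1 i) (f2 i) y x
    + C i / (6 * INR n) * norm2 (vsub x y) ^ 3.
{ have -> : C i / (6 * INR n) * norm2 (vsub x y) ^ 3
      = / INR n * (C i / 6 * norm2 (vsub x y) ^ 3) by field; lra.
  rewrite -Rmult_plus_distr_l; apply: Rmult_le_compat_l; first by left; apply: Rinv_0_lt_compat.
  by have := h1 x Bx i; lra. }
have model_ratio := T_ub _ (ex_intro _ x (conj Bx erefl)).
apply: Rle_trans (ratio_le_approx_ratio (h3 x Bx) (Rge_le _ _ (h2 x Bx)) model_err
  model_ratio T_ge0) _.
apply: Rplus_le_compat_l.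
have -> : C i * r / (6 * INR n * lam) = C i / (6 * INR n) * r / lam by field; lra.
have -> : C i * r ^ 3 / (6 * INR n * alpha) = C i / (6 * INR n) * r ^ 3 / alpha by field; lra.
apply: cubic_ratio_le => //; [| exact: sqrt_pos | exact: Fly_ge_penalty | exact: halpha_lb].
by apply: Rmult_le_pos; [apply: hC | left; apply: Rinv_0_lt_compat; lra].
Qed.
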